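(* Let $k\ge1$ and $n>1$ be integers. Define $k\uparrow\uparrow1=k$ and $k\uparrow\uparrow(j+1)=k^{\,k\uparrow\uparrow j}$ for $j\ge1$. Then the sequence $(k\uparrow\uparrow j)_{j\ge1}$ converges in the ring $\mathbb{Z}_n$ of $n$-adic integers.
   Context: For an integer $n>1$, $\mathbb{Z}_n=\varprojlim_m \mathbb{Z}/n^m\mathbb{Z}$ is the ring of $n$-adic integers; a sequence of integers converges in $\mathbb{Z}_n$ iff for every $m\ge1$ its residues modulo $n^m$ are eventually constant. *)

From mathcomp Require Import all_boot.
Set Implicit Arguments. Unset Strict Implicit. Unset Printing Implicit Defensive.

(* Tetration: tetr k j = k ↑↑ j, with tetr k 0 = 1, so that
   tetr k 1 = k and tetr k (j+1) = k ^ (tetr k j) for j >= 1. *)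
Fixpoint tetr (k j : nat) : nat :=
  match j with
  | 0 => 1
  | j'.+1 => k ^ (tetr k j')
  end.

(* A sequence of natural numbers (a j)_{j>=1} converges in Z_n iff for every
   m >= 1 its residues modulo n^m are eventually constant. *)
Definition nadic_converges (n : nat) (a : nat -> nat) : Prop :=
  forall m, 0 < m -> exists N, forall j, N <= j -> a j = a N %[mod n ^ m].

From mathcomp Require Import all_boot.

(* It suffices to show that for every modulus M > 0 the residues of
   k ↑↑ j modulo M are eventually constant (take M = n^m).  This is proved
   by strong induction on M.  By the pigeonhole principle the powers of k
   modulo M > 1 are eventually periodic, with a preperiod i and a period
   0 < P < M; hence k^a = k^b (mod M) as soon as a, b >= i and
   a = b (mod P).  Now k ↑↑ (j+1) = k ^ (k ↑↑ j), the exponents k ↑↑ j are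
   eventually constant modulo P < M by the induction hypothesis, and they
   eventually exceed i because the tower grows at least linearly. *)

Lemma expn_period_mul (k M i P : nat) :
  k ^ i = k ^ (i + P) %[mod M] -> forall t, k ^ (i + t * P) = k ^ i %[mod M].
Proof.
move=> period; elim=> [|t IH]; first by rewrite mul0n addn0.
by rewrite mulSn addnCA expnD -modnMmr IH modnMmr -expnD addnC period.
Qed.

Lemma expn_congr_period (k M i P a b : nat) :
  k ^ i = k ^ (i + P) %[mod M] -> i <= a -> i <= b -> a = b %[mod P] ->
  k ^ a = k ^ b %[mod M].
Proof.
move=> period; wlog le_ba : a b / b <= a.
  move=> W ia ib ab; case: (leqP b a) => [ba | /ltnW ab'].
    exact: W ba ia ib ab.
  exact/esym/(W _ _ ab' ib ia)/esym.
move=> _ ib ab; have /dvdnP [t def_t] : P %| a - b by rewrite -eqn_mod_dvd // ab.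
have -> : a = (b - i) + (i + t * P) by rewrite addnA subnK // -def_t subnKC.
by rewrite expnD -modnMmr expn_period_mul // modnMmr -expnD subnK.
Qed.

(* Pigeonhole: the powers of k modulo M > 1 repeat with a period P < M. *)
Lemma expn_mod_repeats (k M : nat) : 1 < M ->
  exists i P, 0 < P < M /\ k ^ i = k ^ (i + P) %[mod M].
Proof.
move=> M_gt1; have M_gt0 : 0 < M by apply: ltnW.
pose f (x : 'I_M) : 'I_M := Ordinal (ltn_pmod (k ^ x.+1) M_gt0).
have [/injectiveP f_inj | /injectivePn [x [y neq_xy f_xy]]] :=
  boolP (injectiveb f).
- (* f is onto, so some power k^(z+1) vanishes modulo M: period 1. *)
  have /(congr1 val) /= kz0 := f_invF f_inj (Ordinal M_gt0).
  exists (invF f_inj (Ordinal M_gt0)).+1, 1; split; first by rewrite M_gt1.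
  by rewrite kz0 addn1 expnS -modnMmr kz0 muln0 mod0n.
- have kxy : k ^ x.+1 = k ^ y.+1 %[mod M] by have := congr1 val f_xy.
  have period (u v : 'I_M) : u < v -> k ^ u.+1 = k ^ v.+1 %[mod M] ->
      exists i P, 0 < P < M /\ k ^ i = k ^ (i + P) %[mod M].
    move=> lt_uv kuv; exists u.+1, (v - u); split; last first.
      by rewrite addSn subnKC // ltnW.
    by rewrite subn_gt0 lt_uv (leq_ltn_trans (leq_subr _ _) (ltn_ord v)).
  case: (ltngtP x y) => [lt_xy | lt_yx | eq_xy]; first exact: period lt_xy kxy.
    exact: period lt_yx (esym kxy).
  by move: neq_xy; rewrite (val_inj eq_xy) eqxx.
Qed.

Lemma tetr_ge (k j : nat) : 1 < k -> j <= tetr k j.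
Proof.
move=> k_gt1; elim: j => [|j IH] //=.
by apply: leq_trans (ltn_expl _ k_gt1); rewrite ltnS.
Qed.

Lemma tetr_mod_eventually_const (M k : nat) : 0 < M -> 1 <= k ->
  exists N, forall j, N <= j -> tetr k j = tetr k N %[mod M].
Proof.
elim/ltn_ind: M k => M IH k M_gt0 k_gt0.
have [M_gt1 | M_le1] := ltnP 1 M; last first.
  have -> : M = 1 by apply/eqP; rewrite eqn_leq M_le1 M_gt0.
  by exists 0 => j _; rewrite !modn1.
have [k_gt1 | k_le1] := ltnP 1 k; last first.
  have -> : k = 1 by apply/eqP; rewrite eqn_leq k_le1 k_gt0.
  have tetr1 j : tetr 1 j = 1 by case: j => //= j; rewrite exp1n.
  by exists 0 => j _; rewrite !tetr1.
have [i [P [/andP [P_gt0 P_lt_M] period]]] := @expn_mod_repeats k M M_gt1.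
have [N0 exps_const] := IH P P_lt_M k P_gt0 k_gt0.
(* From N = max N0 i on, the exponents exceed i and agree modulo P. *)
pose N := maxn N0 i.
have exp_ok j : N <= j -> i <= tetr k j /\ tetr k j = tetr k N %[mod P].
  move=> le_Nj; split.
    exact: leq_trans (leq_trans (leq_maxr N0 i) le_Nj) (tetr_ge k j k_gt1).
  by rewrite (exps_const j) ?(exps_const N) ?leq_maxl //
             (leq_trans (leq_maxl N0 i) le_Nj).
exists N.+1 => [[//|j]] /= le_Nj.
have [ij eqj] := exp_ok j le_Nj; have [iN _] := exp_ok N (leqnn N).
exact: expn_congr_period _ _ _ _ _ _ period ij iN eqj.
Qed.

Theorem mainTheorem4 (k n : nat) (hk : 1 <= k) (hn : 1 < n) :
  nadic_converges n (fun j => tetr k j.+1).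
Proof.
move=> m _.
have nm_gt0 : 0 < n ^ m by rewrite expn_gt0 ltnW.
have [N tetr_const] := @tetr_mod_eventually_const (n ^ m) k nm_gt0 hk.
exists N => j le_Nj.
by rewrite (tetr_const j.+1) ?(tetr_const N.+1) // ltnW.
Qed.
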